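(* Let $N\ge 3$, $p>1$, and let $r_1\le r_2\le\dots\le r_N$ be arbitrary points of $[0,1]$. Define $\tilde\sigma\in S_N$ by $$\tilde\sigma(i)=\begin{cases}2i-1 & \text{if } i\le (N+1)/2,\\ 2N-2i+2 & \text{if } i>(N+1)/2.\end{cases}$$ Then the Hamiltonian cycle $h[\tilde\sigma]=(r_{\tilde\sigma(1)},r_{\tilde\sigma(2)},\dots,r_{\tilde\sigma(N)},r_{\tilde\sigma(1)})$ is optimal: $E(h[\tilde\sigma])\le E(h)$ for every Hamiltonian cycle $h$ of $\mathcal K_N$. Equivalently, the minimal cost equals $|r_2-r_1|^p+|r_N-r_{N-1}|^p+\sum_{i=1}^{N-2}|r_{i+2}-r_i|^p$.
   Context: The points $r_1,\dots,r_N$ are the vertices of the complete graph $\mathcal K_N$. For $p\in\mathbb R$ the weight of the edge $\{r_i,r_j\}$ is $w_{ij}=|r_i-r_j|^p$, and the cost of a Hamiltonian cycle $h$ is $E(h)=\sum_{e\in h}w_e$. For a permutation $\sigma\in S_N$, $h[\sigma]$ denotes the Hamiltonian cycle with edges $\{r_{\sigma(i)},r_{\sigma(i+1)}\}$, $i=1,\dots,N$, where $\sigma(N+1):=\sigma(1)$. *)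

From Stdlib Require Import Reals Lra Lia List Arith.
Import ListNotations.
Open Scope R_scope.

(* |x|^p for real p > 0, with the convention 0^p = 0
   (Stdlib's Rpower 0 p is exp (p * ln 0) = 1, so we guard it). *)
Definition abspow (x p : R) : R :=
  if Req_EM_T x 0 then 0 else Rpower (Rabs x) p.

Definition weight (p a b : R) : R := abspow (a - b) p.

Definition is_perm (N : nat) (s : nat -> nat) : Prop :=
  (forall i, (1 <= i <= N)%nat -> (1 <= s i <= N)%nat) /\
  (forall i j, (1 <= i <= N)%nat -> (1 <= j <= N)%nat -> s i = s j -> i = j).

Definition cyc_next (N i : nat) : nat := if Nat.eqb i N then 1%nat else S i.

Definition cycle_cost (N : nat) (p : R) (r : nat -> R) (s : nat -> nat) : R :=
  fold_right Rplus 0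
    (map (fun i => weight p (r (s i)) (r (s (cyc_next N i)))) (seq 1 N)).

Definition sigma_tilde (N : nat) (i : nat) : nat :=
  if Nat.leb (2 * i) (N + 1) then (2 * i - 1)%nat else (2 * N + 2 - 2 * i)%nat.

Definition min_cost_formula (N : nat) (p : R) (r : nat -> R) : R :=
  abspow (r 2%nat - r 1%nat) p + abspow (r N - r (N - 1)%nat) p +
  fold_right Rplus 0
    (map (fun i => abspow (r (i + 2)%nat - r i) p) (seq 1 (N - 2))).

From Stdlib Require Import Reals Lra Lia List Permutation.
Import ListNotations.
Open Scope R_scope.

(* Induction on the number of points, removing the largest point r_N from a tour: this lowers
   the cost by the insertion cost w(a,N) + w(N,b) - w(a,b) of N between its two tour
   neighbours a, b.  Since t |-> t^p is nondecreasing with nondecreasing increments on [0,oo)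
   (p >= 1), this insertion cost is smallest for {a, b} = {N-2, N-1}, where it equals the
   increment of the claimed minimum.  The zigzag tour on N points is the one on N-1 points with
   r_N inserted exactly between r_{N-2} and r_{N-1}, so it attains the bound. *)

Lemma abspow_opp x p : abspow (- x) p = abspow x p.
Proof.
  unfold abspow; destruct (Req_EM_T (- x) 0), (Req_EM_T x 0); try lra.
  now rewrite Rabs_Ropp.
Qed.

Lemma abspow_sub_sym x y p : abspow (x - y) p = abspow (y - x) p.
Proof. rewrite <- abspow_opp; f_equal; ring. Qed.

Lemma abspow_pos x p : 0 < x -> abspow x p = Rpower x p.
Proof.
  intro Hx; unfold abspow; destruct (Req_EM_T x 0); [lra|].
  now rewrite Rabs_right by lra.
Qed.

Lemma abspow_0 p : abspow 0 p = 0.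
Proof. unfold abspow; destruct (Req_EM_T 0 0); lra. Qed.

Lemma abspow_ge0 x p : 0 <= abspow x p.
Proof. unfold abspow; destruct (Req_EM_T x 0); [lra|]. left; apply exp_pos. Qed.

Lemma abspow_le p a b : 0 < p -> 0 <= a <= b -> abspow a p <= abspow b p.
Proof.
  intros Hp Hab; destruct (Req_dec a 0) as [->|Ha].
  - rewrite abspow_0; apply abspow_ge0.
  - rewrite !abspow_pos by lra; apply Rle_Rpower_l; lra.
Qed.

Lemma Rpower_le_base x p : 1 <= p -> 0 < x <= 1 -> Rpower x p <= x.
Proof.
  intros Hp Hx.
  replace p with (1 + (p - 1)) by ring; rewrite Rpower_plus, Rpower_1 by lra.
  assert (Hle : Rpower x (p - 1) <= Rpower 1 (p - 1)) by (apply Rle_Rpower_l; lra).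
  unfold Rpower at 2 in Hle; rewrite ln_1, Rmult_0_r, exp_0 in Hle.
  assert (0 < Rpower x (p - 1)) by apply exp_pos.
  nra.
Qed.

Lemma Rpower_superadditive p b d : 1 <= p -> 0 < b -> 0 < d ->
  Rpower b p + Rpower d p <= Rpower (b + d) p.
Proof.
  intros Hp Hb Hd; set (s := b + d).
  assert (Hs : 0 < s) by (unfold s; lra).
  (* scale by s: (b/s)^p + (d/s)^p <= b/s + d/s = 1 *)
  replace b with (b / s * s) at 1 by (field; lra).
  replace d with (d / s * s) at 1 by (field; lra).
  assert (Hsum : b / s + d / s = 1) by (unfold s; field; lra).
  assert (0 < b / s) by (apply Rdiv_lt_0_compat; lra).
  assert (0 < d / s) by (apply Rdiv_lt_0_compat; lra).
  rewrite <- !Rpower_mult_distr by lra.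
  assert (Rpower (b / s) p <= b / s) by (apply Rpower_le_base; lra).
  assert (Rpower (d / s) p <= d / s) by (apply Rpower_le_base; lra).
  assert (0 < Rpower s p) by apply exp_pos.
  nra.
Qed.

Lemma Rpower_increment_le p a b d : 1 <= p -> 0 < a <= b -> 0 < d ->
  Rpower (a + d) p - Rpower a p <= Rpower (b + d) p - Rpower b p.
Proof.
  intros Hp Hab Hd; destruct (Req_dec a b) as [->|Hne]; [lra|].
  destruct (MVT_cor2 (fun t => Rpower (t + d) p - Rpower t p)
     (fun t => p * Rpower (t + d) (p - 1) - p * Rpower t (p - 1)) a b)
    as [c [Hc Hcab]]; [lra| |].
  - intros c Hc; apply derivable_pt_lim_minus; [|apply derivable_pt_lim_power; lra].
    rewrite <- (Rmult_1_r (p * _)).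
    apply (derivable_pt_lim_comp (fun t => t + d) (fun t => Rpower t p));
      [|apply derivable_pt_lim_power; lra].
    rewrite <- (Rplus_0_r 1).
    apply derivable_pt_lim_plus; [apply derivable_pt_lim_id|apply derivable_pt_lim_const].
  - cbv beta in Hc.
    assert (Rpower c (p - 1) <= Rpower (c + d) (p - 1)) by (apply Rle_Rpower_l; lra).
    assert (0 <= (p * Rpower (c + d) (p - 1) - p * Rpower c (p - 1)) * (b - a))
      by (apply Rmult_le_pos; nra).
    lra.
Qed.

Lemma abspow_increment_le p a b d : 1 <= p -> 0 <= a <= b -> 0 <= d ->
  abspow (a + d) p - abspow a p <= abspow (b + d) p - abspow b p.
Proof.
  intros Hp Hab Hd.
  destruct (Req_dec d 0) as [->|Hd0]; [rewrite !Rplus_0_r; lra|].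
  destruct (Req_dec b 0) as [->|Hb0]; [replace a with 0 by lra; lra|].
  (* at a = 0 the derivative argument breaks down (Rpower 0 p is junk); use superadditivity *)
  destruct (Req_dec a 0) as [->|Ha0].
  - rewrite abspow_0, Rplus_0_l, !abspow_pos by lra.
    pose proof (Rpower_superadditive p b d Hp ltac:(lra) ltac:(lra)); lra.
  - rewrite !abspow_pos by lra; apply Rpower_increment_le; lra.
Qed.

Lemma insertion_cost_antitone (f : R -> R)
  (f_mono : forall a b, 0 <= a <= b -> f a <= f b)
  (f_incr : forall a b d, 0 <= a <= b -> 0 <= d -> f (a + d) - f a <= f (b + d) - f b)
  xa xb xc xd e : xa <= xb <= xd -> xa <= xc <= xd -> xd <= e ->
  f (e - xc) + f (e - xd) - f (xd - xc) <= f (e - xa) + f (e - xb) - f (xb - xa).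
Proof.
  intros Hb Hc He.
  pose proof (f_incr (xd - xc) (xd - xa) (e - xd) ltac:(lra) ltac:(lra)) as Hinc.
  replace (xd - xc + (e - xd)) with (e - xc) in Hinc by ring.
  replace (xd - xa + (e - xd)) with (e - xa) in Hinc by ring.
  pose proof (f_mono (e - xd) (e - xb) ltac:(lra)).
  pose proof (f_mono (xb - xa) (xd - xa) ltac:(lra)).
  lra.
Qed.

Section Tours.

Variables (A : Type) (w : A -> A -> R).

Fixpoint path_cost (a : A) (l : list A) : R :=
  match l with [] => 0 | b :: t => w a b + path_cost b t end.

Definition tour_cost (l : list A) : R :=
  match l with [] => 0 | a :: t => path_cost a (t ++ [a]) end.

Lemma last_cons_default (a b : A) t : last (b :: t) a = last t b.
Proof. induction t as [|c t IH]; [reflexivity|]; destruct t; [reflexivity|exact IH]. Qed.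

Lemma last_In (d : A) t : In (last t d) (d :: t).
Proof.
  revert d; induction t as [|c t IH]; intro d; [now left|].
  rewrite last_cons_default; right; apply IH.
Qed.

Lemma path_cost_snoc a t c : path_cost a (t ++ [c]) = path_cost a t + w (last t a) c.
Proof.
  revert a; induction t as [|b t IH]; intro a; [simpl; ring|]; cbn [app path_cost].
  rewrite IH, last_cons_default; ring.
Qed.

Lemma tour_cost_rotate l1 l2 : tour_cost (l1 ++ l2) = tour_cost (l2 ++ l1).
Proof.
  revert l2; induction l1 as [|a l1 IH]; intro l2; [now rewrite app_nil_r|].
  assert (Hrot1 : forall t, tour_cost (a :: t) = tour_cost (t ++ [a])).
  { intros [|b t]; [reflexivity|]; simpl.
    rewrite !path_cost_snoc, last_last; ring. }
  simpl app; rewrite Hrot1, <- app_assoc, IH, <- app_assoc; reflexivity.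
Qed.

Lemma tour_cost_insert x b m :
  tour_cost (x :: b :: m) = tour_cost (b :: m) + w (last m b) x + w x b - w (last m b) b.
Proof. simpl; rewrite !path_cost_snoc; simpl; ring. Qed.

End Tours.

Arguments path_cost {A} w a l.
Arguments tour_cost {A} w l.

Definition edge (p : R) (r : nat -> R) (i j : nat) : R := weight p (r i) (r j).

Lemma edge_sym p r i j : edge p r i j = edge p r j i.
Proof. apply abspow_sub_sym. Qed.

Lemma fold_Rplus_app (l1 l2 : list R) :
  fold_right Rplus 0 (l1 ++ l2) = fold_right Rplus 0 l1 + fold_right Rplus 0 l2.
Proof. induction l1 as [|x l1 IH]; simpl; [ring|rewrite IH; ring]. Qed.

Lemma path_cost_map_seq (w : nat -> nat -> R) s a k :
  path_cost w (s a) (map s (seq (S a) k)) =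
  fold_right Rplus 0 (map (fun i => w (s i) (s (S i))) (seq a k)).
Proof. revert a; induction k as [|k IH]; intro a; simpl; [|rewrite IH]; reflexivity. Qed.

Lemma last_map_seq (s : nat -> nat) a k : last (map s (seq (S a) k)) (s a) = s (a + k)%nat.
Proof.
  revert a; induction k as [|k IH]; intro a; [now rewrite Nat.add_0_r|].
  cbn [seq map]; rewrite last_cons_default, IH; f_equal; lia.
Qed.

Lemma cycle_cost_tour N p r s : cycle_cost N p r s = tour_cost (edge p r) (map s (seq 1 N)).
Proof.
  destruct N as [|M]; [reflexivity|].
  simpl seq; simpl map; unfold tour_cost.
  rewrite path_cost_snoc, path_cost_map_seq, last_map_seq.
  unfold cycle_cost; rewrite seq_S, map_app, fold_Rplus_app; simpl.
  unfold cyc_next at 2; rewrite Nat.eqb_refl.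
  rewrite (map_ext_in _ (fun i => edge p r (s i) (s (S i)))); [unfold edge; ring|].
  intros i Hi; apply in_seq in Hi; unfold cyc_next.
  destruct (Nat.eqb_spec i (S M)); [lia|reflexivity].
Qed.

Lemma min_cost_formula_S n p r : (2 <= n)%nat ->
  min_cost_formula (S n) p r = min_cost_formula n p r - abspow (r n - r (n - 1)%nat) p
    + abspow (r (S n) - r n) p + abspow (r (S n) - r (n - 1)%nat) p.
Proof.
  intro Hn; unfold min_cost_formula.
  replace (S n - 1)%nat with n by lia.
  replace (S n - 2)%nat with (S (n - 2)) by lia.
  rewrite seq_S, map_app, fold_Rplus_app; simpl.
  replace (S (n - 2 + 2)) with (S n) by lia.
  replace (S (n - 2)) with (n - 1)%nat by lia.
  ring.
Qed.

Section LowerBound.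

Variables (N : nat) (p : R) (r : nat -> R).
Hypothesis hp : 1 <= p.
Hypothesis hmono : forall i j, (1 <= i)%nat -> (i <= j)%nat -> (j <= N)%nat -> r i <= r j.

Lemma min_cost_formula_S_le_insertion n a b :
  (2 <= n)%nat -> (S n <= N)%nat -> a <> b -> (1 <= a <= n)%nat -> (1 <= b <= n)%nat ->
  min_cost_formula (S n) p r - min_cost_formula n p r <=
  edge p r a (S n) + edge p r (S n) b - edge p r a b.
Proof.
  intros Hn HnN Hab Ha Hb; rewrite min_cost_formula_S by lia.
  (* inserting the largest point between n-1 and n is cheapest *)
  assert (Hins : forall x y, (x < y)%nat -> (1 <= x)%nat -> (y <= n)%nat ->
     abspow (r (S n) - r (n - 1)%nat) p + abspow (r (S n) - r n) p - abspow (r n - r (n - 1)%nat) p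
     <= abspow (r (S n) - r x) p + abspow (r (S n) - r y) p - abspow (r y - r x) p).
  { intros x y Hxy Hx Hy.
    apply (insertion_cost_antitone (fun t => abspow t p)).
    - intros; apply abspow_le; lra.
    - intros; apply abspow_increment_le; lra.
    - split; apply hmono; lia.
    - split; apply hmono; lia.
    - apply hmono; lia. }
  rewrite (edge_sym p r a (S n)); unfold edge, weight.
  destruct (Nat.lt_gt_cases a b) as [[Hlt|Hgt] _]; [exact Hab| |].
  - pose proof (Hins a b Hlt ltac:(lia) ltac:(lia)).
    rewrite (abspow_sub_sym (r a)); lra.
  - pose proof (Hins b a Hgt ltac:(lia) ltac:(lia)); lra.
Qed.

Lemma min_cost_formula_le_tour_cost n l : (2 <= n <= N)%nat -> Permutation l (seq 1 n) ->
  min_cost_formula n p r <= tour_cost (edge p r) l.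
Proof.
  revert l; induction n as [|n IH]; intros l Hn Hl; [lia|].
  destruct (Nat.eq_dec n 1) as [->|Hn1].
  - apply Permutation_sym, Permutation_length_2_inv in Hl.
    pose proof (edge_sym p r 1 2).
    destruct Hl as [-> | ->]; unfold min_cost_formula, edge, weight in *; simpl in *; lra.
  - rewrite seq_S in Hl; replace (1 + n)%nat with (S n) in Hl by lia.
    destruct (Permutation_vs_elt_inv (seq 1 n) [] (S n) Hl) as [l1 [l2 ->]].
    assert (Hm : Permutation (l2 ++ l1) (seq 1 n)).
    { rewrite Permutation_app_comm, <- (app_nil_r (seq 1 n)).
      exact (Permutation_app_inv _ _ _ _ _ Hl). }
    rewrite tour_cost_rotate; simpl app.
    pose proof (IH _ ltac:(lia) Hm) as IHm.
    revert Hm IHm; generalize (l2 ++ l1) as m; intros [|b m] Hm IHm.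
    + apply Permutation_length in Hm; rewrite length_seq in Hm; simpl in Hm; lia.
    + assert (Hin : forall x, In x (b :: m) -> (1 <= x <= n)%nat).
      { intros x Hx; apply (Permutation_in _ Hm), in_seq in Hx; lia. }
      assert (Hnodup : NoDup (b :: m))
        by exact (Permutation_NoDup (Permutation_sym Hm) (seq_NoDup _ _)).
      destruct m as [|c m].
      { apply Permutation_length in Hm; rewrite length_seq in Hm; simpl in Hm; lia. }
      assert (Hlast : In (last (c :: m) b) (c :: m))
        by (rewrite last_cons_default; apply last_In).
      assert (Hne : last (c :: m) b <> b)
        by (intros E; rewrite E in Hlast; inversion Hnodup; contradiction).
      rewrite tour_cost_insert.
      pose proof (min_cost_formula_S_le_insertion n (last (c :: m) b) b
        ltac:(lia) ltac:(lia) Hne (Hin _ (or_intror Hlast)) (Hin _ (or_introl eq_refl))).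
      lra.
Qed.

End LowerBound.

Lemma sigma_tilde_is_perm N : is_perm N (sigma_tilde N).
Proof.
  split; intros i; unfold sigma_tilde.
  - destruct (Nat.leb_spec (2 * i) (N + 1)); lia.
  - intros j Hi Hj; destruct (Nat.leb_spec (2 * i) (N + 1)), (Nat.leb_spec (2 * j) (N + 1)); lia.
Qed.

Lemma zigzag_insert N : (2 <= N)%nat -> exists L1 L2 a b,
  map (sigma_tilde N) (seq 1 N) = L1 ++ a :: b :: L2 /\
  map (sigma_tilde (S N)) (seq 1 (S N)) = L1 ++ a :: S N :: b :: L2 /\
  ((a = N - 1 /\ b = N) \/ (a = N /\ b = N - 1))%nat.
Proof.
  intro HN; set (k := ((N + 1) / 2)%nat).
  (* position k holds the largest odd label, position k + 1 the largest even one *)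
  assert (Hk : (2 * k <= N + 1 <= 2 * k + 1)%nat).
  { pose proof (Nat.div_mod_eq (N + 1) 2); pose proof (Nat.mod_upper_bound (N + 1) 2); lia. }
  set (s := sigma_tilde N); set (s' := sigma_tilde (S N)).
  exists (map s (seq 1 (k - 1))), (map s (seq (k + 2) (N - k - 1))), (s k), (s (S k)).
  split; [|split].
  - replace (seq 1 N) with (seq 1 (k - 1 + (2 + (N - k - 1)))) by (f_equal; lia).
    rewrite !seq_app, !map_app; cbn [seq map app].
    replace (1 + (k - 1))%nat with k by lia.
    replace (S k + 1)%nat with (k + 2)%nat by lia; reflexivity.
  - replace (seq 1 (S N)) with (seq 1 (k - 1 + (3 + (N - k - 1)))) by (f_equal; lia).
    rewrite !seq_app, !map_app; cbn [seq map app].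
    replace (1 + (k - 1))%nat with k by lia.
    replace (k + 3)%nat with (S (k + 2)) by lia.
    rewrite <- (seq_shift _ (k + 2)), map_map.
    assert (Hlow : forall i, (1 <= i <= k)%nat -> s' i = s i).
    { intros i Hi; unfold s, s', sigma_tilde.
      destruct (Nat.leb_spec (2 * i) (S N + 1)), (Nat.leb_spec (2 * i) (N + 1)); lia. }
    assert (Hhigh : forall i, (k < i <= N)%nat -> s' (S i) = s i).
    { intros i Hi; unfold s, s', sigma_tilde.
      destruct (Nat.leb_spec (2 * S i) (S N + 1)), (Nat.leb_spec (2 * i) (N + 1)); lia. }
    assert (Hmid : s' (S k) = S N).
    { unfold s', sigma_tilde; destruct (Nat.leb_spec (2 * S k) (S N + 1)); lia. }
    rewrite Hlow, Hmid, Hhigh by lia.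
    f_equal; [|do 3 f_equal]; apply map_ext_in; intros i Hi; apply in_seq in Hi.
    + apply Hlow; lia.
    + apply Hhigh; lia.
  - unfold s, sigma_tilde.
    destruct (Nat.leb_spec (2 * k) (N + 1)), (Nat.leb_spec (2 * S k) (N + 1)); lia.
Qed.

Lemma tour_cost_zigzag N p r : (2 <= N)%nat ->
  tour_cost (edge p r) (map (sigma_tilde N) (seq 1 N)) = min_cost_formula N p r.
Proof.
  induction N as [|N IH]; intro HN; [lia|].
  destruct (Nat.eq_dec N 1) as [->|HN1].
  { change (map (sigma_tilde 2) (seq 1 2)) with [1%nat; 2%nat].
    pose proof (edge_sym p r 1 2); unfold min_cost_formula, edge, weight in *; simpl; lra. }
  destruct (zigzag_insert N ltac:(lia)) as (L1 & L2 & a & b & Hz & Hz' & Hab).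
  rewrite Hz'.
  replace (L1 ++ a :: S N :: b :: L2) with ((L1 ++ [a]) ++ S N :: b :: L2)
    by (rewrite <- app_assoc; reflexivity).
  rewrite tour_cost_rotate; cbn [app].
  rewrite app_assoc, tour_cost_insert, last_last.
  replace (b :: (L2 ++ L1) ++ [a]) with ((b :: L2) ++ (L1 ++ [a]))
    by (simpl; rewrite app_assoc; reflexivity).
  rewrite tour_cost_rotate, <- app_assoc; cbn [app]; rewrite <- Hz, IH, min_cost_formula_S by lia.
  rewrite (edge_sym p r (S N) b); unfold edge, weight.
  rewrite !(abspow_sub_sym (r _) (r (S N))).
  destruct Hab as [[-> ->] | [-> ->]]; rewrite ?(abspow_sub_sym (r (N - 1)%nat) (r N)); ring.
Qed.

Lemma is_perm_Permutation N s : is_perm N s -> Permutation (map s (seq 1 N)) (seq 1 N).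
Proof.
  intros [Hrange Hinj]; apply NoDup_Permutation_bis.
  - apply NoDup_map_NoDup_ForallPairs; [|apply seq_NoDup].
    intros i j Hi Hj; apply in_seq in Hi, Hj; apply Hinj; lia.
  - now rewrite length_map.
  - intros x Hx; apply in_map_iff in Hx as [i [<- Hi]]; apply in_seq in Hi.
    apply in_seq; specialize (Hrange i ltac:(lia)); lia.
Qed.

Theorem proposition1 (N : nat) (p : R) (r : nat -> R)
  (hN : (3 <= N)%nat) (hp : 1 < p)
  (hr01 : forall i, (1 <= i <= N)%nat -> 0 <= r i <= 1)
  (hmono : forall i j, (1 <= i)%nat -> (i <= j)%nat -> (j <= N)%nat -> r i <= r j) :
  is_perm N (sigma_tilde N) /\
  (forall s : nat -> nat, is_perm N s ->
     cycle_cost N p r (sigma_tilde N) <= cycle_cost N p r s) /\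
  cycle_cost N p r (sigma_tilde N) = min_cost_formula N p r.
Proof.
  assert (Hzig : cycle_cost N p r (sigma_tilde N) = min_cost_formula N p r)
    by (rewrite cycle_cost_tour; apply tour_cost_zigzag; lia).
  split; [apply sigma_tilde_is_perm|split; [|exact Hzig]].
  intros s Hs; rewrite Hzig, cycle_cost_tour.
  apply (min_cost_formula_le_tour_cost N p r ltac:(lra) hmono); [lia|].
  now apply is_perm_Permutation.
Qed.
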